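(* Let $a>b\ge 1$ be integers, $n=a+b$, and let $\breve{K}_{a,b}$ be the Mycielskian of the complete bipartite graph $K_{a,b}$. Then $$E_{\chi^+}(\breve{K}_{a,b})=2+\frac{2a-1}{2a+2b+1},\qquad V_{\chi^+}(\breve{K}_{a,b})=\frac{16a^2+4b^2+8a^2b+8b^2a+24ab+8a+2b}{(2n+1)^3}.$$
   Context: Mycielskian: for a graph $G$ with vertex set $\{v_1,\dots,v_m\}$, its Mycielskian $\breve{G}$ is the graph with vertex set $\{v_1,\dots,v_m\}\cup\{u_1,\dots,u_m\}\cup\{u\}$ (all new, distinct vertices) whose edges are: all edges of $G$; the edge $u_iv_j$ whenever $v_iv_j$ is an edge of $G$; and the edges $uu_i$ for all $i$. Colouring parameters: for a proper colouring $\mathcal{C}=\{c_1,\dots,c_k\}$ of $G$ with colours indexed $1,\dots,k$, let $\theta(c_i)$ be the number of vertices of colour $c_i$ and $f(i)=\theta(c_i)/|V(G)|$. The colouring mean is $\mu_{\mathcal{C}}=\sum_i i\,f(i)$, the colouring variance is $\sum_i (i-\mu_{\mathcal{C}})^2 f(i)$, and the colouring sum is $\sum_i i\,\theta(c_i)$. The $\chi^+$-chromatic mean $E_{\chi^+}(G)$ (resp. $\chi^+$-chromatic variance $V_{\chi^+}(G)$) is the colouring mean (resp. variance) of a proper colouring of $G$ with exactly $\chi(G)$ colours $c_1,\dots,c_{\chi(G)}$ whose colouring sum is maximum among all such colourings. *)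

From HB Require Import structures.
From mathcomp Require Import all_boot all_order all_algebra.
Set Implicit Arguments. Unset Strict Implicit. Unset Printing Implicit Defensive.
Import Order.TTheory GRing.Theory Num.Theory.

(* A simple graph is a (symmetric, irreflexive) relation e : rel V on a finType V. *)

(* Vertex type of the Mycielskian: Some (inl v) = v_i, Some (inr v) = u_i, None = u. *)
Definition MycV (T : finType) : finType := option (T + T)%type.

Definition myc_rel (T : finType) (e : rel T) : rel (MycV T) :=
  fun x y =>
    match x, y with
    | Some (inl v), Some (inl w) => e v w
    | Some (inr v), Some (inl w) => e v w        (* u_i v_j iff v_i v_j edge *)
    | Some (inl v), Some (inr w) => e w v
    | Some (inr _), None => true
    | None, Some (inr _) => true
    | _, _ => false
    end.

Definition KabV (a b : nat) : finType := ('I_a + 'I_b)%type.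

Definition Kab_rel (a b : nat) : rel (KabV a b) :=
  fun x y =>
    match x, y with
    | inl _, inr _ => true
    | inr _, inl _ => true
    | _, _ => false
    end.

(* Proper colourings with k colours; colour i : 'I_k is the colour c_{i+1}. *)
Definition proper_col (V : finType) (e : rel V) (k : nat) (f : V -> 'I_k) : bool :=
  [forall x, forall y, e x y ==> (f x != f y)].

Definition colorable (V : finType) (e : rel V) (k : nat) : bool :=
  [exists f : {ffun V -> 'I_k}, proper_col e f].

(* Chromatic number: least k <= |V| admitting a proper k-colouring
   (always exists for loopless graphs). *)
Definition chi (V : finType) (e : rel V) : nat :=
  find (colorable e) (iota 0 #|V|.+1).

Definition theta (V : finType) (k : nat) (f : V -> 'I_k) (i : 'I_k) : nat :=
  #|[pred x | f x == i]|.

Definition col_sum (V : finType) (k : nat) (f : V -> 'I_k) : nat :=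
  \sum_(i < k) i.+1 * theta f i.

Local Open Scope ring_scope.

Definition col_mean (V : finType) (k : nat) (f : V -> 'I_k) : rat :=
  \sum_(i < k) (i.+1)%:R * ((theta f i)%:R / (#|V|)%:R).

Definition col_var (V : finType) (k : nat) (f : V -> 'I_k) : rat :=
  \sum_(i < k) ((i.+1)%:R - col_mean f) ^+ 2 * ((theta f i)%:R / (#|V|)%:R).

Local Close Scope ring_scope.

Definition chi_plus_colouring (V : finType) (e : rel V) (f : V -> 'I_(chi e)) : Prop :=
  proper_col e f /\
  forall g : V -> 'I_(chi e), proper_col e g -> (col_sum g <= col_sum f)%N.

From HB Require Import structures.
From mathcomp Require Import all_boot all_order all_algebra.
From mathcomp Require Import zify ring lra.
Import Order.TTheory GRing.Theory Num.Theory.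
Set Implicit Arguments. Unset Strict Implicit.

(* Write u for the apex of the Mycielskian and call the copies u_i the shadows.
   The 5-cycle u_x u u_y x y (x in the a-side, y in the b-side) forces three
   colours, and every colour occurs on it in a proper 3-colouring; so chi = 3
   and colour 1 is used.  A colour class is independent, hence has at most 2a
   vertices: with u it lies in u plus one side; with a vertex of the a-side it
   lies in the a-side and its shadows; with a vertex of the b-side it lies in the
   b-side and its shadows; otherwise it lies among the a + b shadows.  With
   colours 1, 2, 3 the colour sum is 2|V| - theta_1 + theta_3 <= 2|V| - 1 + 2a,
   attained by colouring u with 1, the b-side and its shadows with 2 and the
   a-side and its shadows with 3.  So a chi^+-colouring has class sizes 1, 2b,
   2a, and the mean and variance follow by computation. *)

Lemma card_option_pred (T : finType) (P : pred (option T)) :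
  #|P| = P None + #|[pred x | P (Some x)]|.
Proof.
rewrite -!sum1_card !big_mkcond (bigD1 None) //=; congr (_ + _).
rewrite (reindex_omap Some id) //=; last by case.
by rewrite [RHS]big_mkcond; apply: eq_bigl => x; rewrite eqxx.
Qed.

Lemma card_sum_pred (T1 T2 : finType) (P : pred (T1 + T2)) :
  #|P| = #|[pred i | P (inl i)]| + #|[pred j | P (inr j)]|.
Proof. by rewrite -!sum1_card big_sumType. Qed.

Lemma no_pair_card_eq0 (I J : finType) (P : pred I) (Q : pred J) :
  (forall i j, P i -> Q j -> False) -> #|P| = 0 \/ #|Q| = 0.
Proof.
move=> PQ; case: (pickP P) => [i Pi | P0]; last by left; apply: eq_card0.
by right; apply: eq_card0 => j; apply/negbTE/negP/(PQ i).
Qed.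

Section Colourings.
Variables (V : finType) (e : rel V).

Lemma proper_colP k (f : V -> 'I_k) :
  reflect (forall x y, e x y -> f x != f y) (proper_col e f).
Proof.
apply: (iffP forallP) => [P x y exy | P x]; last by apply/forallP => y; apply/implyP/P.
by have /forallP/(_ y)/implyP := P x; apply.
Qed.

Lemma colour_class_independent k (f : V -> 'I_k) c : proper_col e f ->
  {in [pred x | f x == c] &, forall x y, ~~ e x y}.
Proof.
move/proper_colP=> P x y; rewrite !inE => /eqP fx /eqP fy.
by apply/negP => /P; rewrite fx fy eqxx.
Qed.

Lemma sum_theta k (f : V -> 'I_k) : \sum_(i < k) theta f i = #|V|.
Proof.
rewrite -sum1_card (partition_big f xpredT) //=.
by apply: eq_bigr => i _; rewrite /theta -sum1_card.
Qed.

Lemma proper_col_C5 k (f : V -> 'I_k) x0 x1 x2 x3 x4 :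
  e x0 x1 -> e x1 x2 -> e x2 x3 -> e x3 x4 -> e x4 x0 -> proper_col e f ->
  3 <= k /\ (k <= 3 -> forall c : 'I_k, exists x, f x = c).
Proof.
move=> e01 e12 e23 e34 e40 /proper_colP P.
have := P _ _ e01; have := P _ _ e12; have := P _ _ e23; have := P _ _ e34.
have := P _ _ e40; rewrite -!(inj_eq (@ord_inj k)).
move=> /eqP n40 /eqP n34 /eqP n23 /eqP n12 /eqP n01.
have := ltn_ord (f x0); have := ltn_ord (f x1); have := ltn_ord (f x2).
have := ltn_ord (f x3); have := ltn_ord (f x4) => l4 l3 l2 l1 l0.
split=> [|k3 c]; first by lia.
have := ltn_ord c => lc.
have : f x0 = c :> nat \/ f x1 = c :> nat \/ f x2 = c :> nat \/ f x3 = c :> nat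
       \/ f x4 = c :> nat by lia.
by case=> [|[|[|[]]]] /ord_inj fc; eexists; exact: fc.
Qed.

Lemma chi_eq k : k <= #|V| -> colorable e k ->
  (forall j, j < k -> ~~ colorable e j) -> chi e = k.
Proof.
move=> kV ck nc; rewrite /chi; set s := iota 0 #|V|.+1.
have has_s : has (colorable e) s by apply/hasP; exists k; rewrite ?mem_iota.
have [lt_k_chi | lt_chi_k | //] := ltngtP k (find (colorable e) s).
  by have := @before_find _ 0 (colorable e) _ _ lt_k_chi; rewrite nth_iota // ck.
have := nth_find 0 has_s.
rewrite nth_iota; last by rewrite -(size_iota 0 #|V|.+1) -has_find.
by rewrite add0n (negbTE (nc _ lt_chi_k)).
Qed.

End Colourings.

Section MycielskianKab.
Variables a b : nat.
Local Notation V := (MycV (KabV a b)).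
Local Notation e := (myc_rel (@Kab_rel a b)).

Lemma card_MycV_Kab : #|V| = (2 * (a + b)).+1.
Proof. by rewrite card_option card_sum /KabV card_sum !card_ord; lia. Qed.

Lemma card_MycV_Kab_pred (S : pred V) :
  #|S| = S None
    + (#|[pred i | S (Some (inl (inl i)))]| + #|[pred j | S (Some (inl (inr j)))]|)
    + (#|[pred i | S (Some (inr (inl i)))]| + #|[pred j | S (Some (inr (inr j)))]|).
Proof. by rewrite card_option_pred card_sum_pred !card_sum_pred addnA. Qed.

Lemma card_independent_MycV_Kab (S : pred V) : 0 < a -> b <= a ->
  {in S &, forall x y, ~~ e x y} -> #|S| <= 2 * a.
Proof.
move=> a_gt0 le_ba indS.
have edge_free x y : x \in S -> y \in S -> e x y -> False.
  by move=> Sx Sy exy; have := indS x y Sx Sy; rewrite exy.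
rewrite card_MycV_Kab_pred.
set vA := #|_|; set vB := #|_|; set uA := #|_|; set uB := #|_|.
have le_vA : vA <= a by rewrite -[a]card_ord max_card.
have le_vB : vB <= b by rewrite -[b]card_ord max_card.
have le_uA : uA <= a by rewrite -[a]card_ord max_card.
have le_uB : uB <= b by rewrite -[b]card_ord max_card.
have vA_vB : vA = 0 \/ vB = 0.
  by apply: no_pair_card_eq0 => i j Si Sj; exact: edge_free Si Sj isT.
have vA_uB : vA = 0 \/ uB = 0.
  by apply: no_pair_card_eq0 => i j Si Sj; exact: edge_free Si Sj isT.
have vB_uA : vB = 0 \/ uA = 0.
  by apply: no_pair_card_eq0 => i j Si Sj; exact: edge_free Si Sj isT.
case SNone: (S None) => /=; last by lia.
have uA0 : uA = 0.
  by apply: eq_card0 => i; rewrite !inE; apply/negP => Si; exact: edge_free SNone Si isT.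
have uB0 : uB = 0.
  by apply: eq_card0 => j; rewrite !inE; apply/negP => Sj; exact: edge_free SNone Sj isT.
lia.
Qed.

Lemma proper_col_MycV_Kab k (f : V -> 'I_k) : 0 < a -> 0 < b -> proper_col e f ->
  3 <= k /\ (k <= 3 -> forall c : 'I_k, exists x, f x = c).
Proof.
move=> a_gt0 b_gt0; pose i := Ordinal a_gt0; pose j := Ordinal b_gt0.
exact: (@proper_col_C5 _ e k f (Some (inr (inl i))) None (Some (inr (inr j)))
          (Some (inl (inl i))) (Some (inl (inr j)))).
Qed.

Definition MycKab_col3 (x : V) : 'I_3 :=
  match x with
  | None => @Ordinal 3 0 isT
  | Some (inl (inr _)) | Some (inr (inr _)) => @Ordinal 3 1 isT
  | Some (inl (inl _)) | Some (inr (inl _)) => @Ordinal 3 2 isT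
  end.

Lemma MycKab_col3_proper : proper_col e MycKab_col3.
Proof. by apply/proper_colP => -[[[?|?]|[?|?]]|] [[[?|?]|[?|?]]|]. Qed.

Lemma col_sum_MycKab_col3 : col_sum MycKab_col3 = 6 * a + 4 * b + 1.
Proof.
rewrite /col_sum !big_ord_recl big_ord0 /theta !card_MycV_Kab_pred /=.
have card_true n : #|[pred _ : 'I_n | true]| = n.
  by rewrite -[RHS]card_ord; apply: eq_card.
have card_false n : #|[pred _ : 'I_n | false]| = 0 by apply: eq_card0.
by rewrite -!(inj_eq (@ord_inj 3)) /= !card_true !card_false /bump /=; lia.
Qed.

Lemma chi_MycV_Kab : 0 < a -> 0 < b -> chi e = 3.
Proof.
move=> a_gt0 b_gt0; apply: chi_eq.
- by rewrite card_MycV_Kab; lia.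
- apply/existsP; exists [ffun x => MycKab_col3 x].
  by apply/proper_colP => x y; rewrite !ffunE; apply/proper_colP/MycKab_col3_proper.
- move=> k lt_k3; apply/existsP => -[g /(proper_col_MycV_Kab a_gt0 b_gt0)[]]; lia.
Qed.

Lemma theta_max_col_sum (f : V -> 'I_3) : 0 < b -> b < a -> proper_col e f ->
    (forall g : V -> 'I_3, proper_col e g -> col_sum g <= col_sum f) ->
  forall c : 'I_3, theta f c = nth 0 [:: 1; 2 * b; 2 * a] c.
Proof.
move=> b_gt0 lt_ba Pf max_f.
have a_gt0 : 0 < a by lia.
have le_theta c : theta f c <= 2 * a.
  apply: card_independent_MycV_Kab (ltnW lt_ba) _ => //.
  exact: colour_class_independent Pf.
have theta0_gt0 : 0 < theta f ord0.
  have [_ /(_ (leqnn 3) ord0) [x fx]] := proper_col_MycV_Kab a_gt0 b_gt0 Pf.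
  by apply/card_gt0P; exists x; rewrite inE fx.
have sum_V := sum_theta f; have max_sum := max_f _ MycKab_col3_proper.
rewrite col_sum_MycKab_col3 card_MycV_Kab /col_sum in sum_V max_sum.
rewrite !big_ord_recl !big_ord0 /= /bump /= in sum_V max_sum.
have le_theta2 := le_theta (lift ord0 (lift ord0 ord0)).
have [t0 t1 t2] : [/\ theta f ord0 = 1, theta f (lift ord0 ord0) = 2 * b
  & theta f (lift ord0 (lift ord0 ord0)) = 2 * a] by split; lia.
case=> -[|[|[|//]]] lt_c3 /=; [apply: etrans t0 | apply: etrans t1 | apply: etrans t2].
all: by congr (theta f _); apply: val_inj.
Qed.

End MycielskianKab.

Local Open Scope ring_scope.

Theorem theorem3p3 (a b : nat) (hb : (1 <= b)%N) (hab : (b < a)%N)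
  (f : MycV (KabV a b) -> 'I_(chi (myc_rel (@Kab_rel a b))))
  (hf : chi_plus_colouring f) :
  col_mean f = 2 + (2 * a%:R - 1) / (2 * a%:R + 2 * b%:R + 1) :> rat /\
  col_var f =
    (16 * a%:R ^+ 2 + 4 * b%:R ^+ 2 + 8 * a%:R ^+ 2 * b%:R + 8 * b%:R ^+ 2 * a%:R
     + 24 * a%:R * b%:R + 8 * a%:R + 2 * b%:R)
    / (2 * (a + b)%:R + 1) ^+ 3 :> rat.
Proof.
have a_gt0 : (0 < a)%N by apply: leq_ltn_trans hab.
move: f hf; rewrite /chi_plus_colouring (chi_MycV_Kab a_gt0 hb) => f [Pf max_f].
have theta_f := theta_max_col_sum hb hab Pf max_f.
have card_V : #|MycV (KabV a b)|%:R = 2 * (a%:R + b%:R) + 1 :> rat.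
  by rewrite card_MycV_Kab -addn1 natrD natrM natrD.
rewrite /col_var /col_mean card_V !big_ord_recl !big_ord0 !theta_f /= /bump /= !natrD.
have a_ge0 : 0 <= a%:R :> rat := ler0n _ a.
have b_ge0 : 0 <= b%:R :> rat := ler0n _ b.
by split; field; apply/eqP; lra.
Qed.
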